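(* Let $\mathcal{P}$ be a set of inductively defined predicates and let $P \in \mathcal{P}$, with parameters $(\vec{\alpha},\vec{\beta},\vec{\xi})$, be syntactically compositional. Then $P$ is semantically compositional, i.e. for every pair $\vec{\gamma}=(\gamma_1,\gamma_2)$ of a location variable and a data variable, the entailment $$\exists \vec{\beta}.\ P(\vec{\alpha},\vec{\beta},\vec{\xi}) \ast P(\vec{\beta},\vec{\gamma},\vec{\xi}) \Rightarrow P(\vec{\alpha},\vec{\gamma},\vec{\xi})$$ holds, that is, every stack–heap pair $(s,h)$ satisfying the left-hand side also satisfies the right-hand side.
   Context: Separation logic setting: location variables (interpreted in a set $\mathbb{L}$ of locations, with a constant ${\sf nil}$) and data variables (interpreted as data values, multisets of values, etc.); a set $\mathcal{F}$ of pointer fields and $\mathcal{D}$ of data fields. A state is a pair $(s,h)$: a stack $s$ assigning values to variables, and a heap $h$, a finite partial function mapping pairs (location, pointer field) to locations and pairs (location, data field) to data values. Formulas: pure formulas $\Pi$ (conjunctions of (dis)equalities of location variables and constraints $\Delta$ over data variables in some decidable theory), spatial formulas $\Sigma ::= \mathtt{emp} \mid E\mapsto\rho \mid Q(E,\vec{F}) \mid \Sigma\ast\Sigma$, and formulas built as $\Pi\land\Sigma$, disjunction and existential quantification. $\mathtt{emp}$ holds iff the heap is empty; $E\mapsto\{(f_i,x_i)\}_{i\in I}$ holds iff the heap is defined exactly on location $s(E)$ with fields $f_i$ and $h(s(E),f_i)=s(x_i)$; $\Sigma_1\ast\Sigma_2$ holds iff the heap splits into two domain-disjoint parts satisfying $\Sigma_1$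 and $\Sigma_2$ respectively. Each predicate $Q\in\mathcal{P}$ is defined by a finite set of rules $Q(E,\vec{F}) ::= \exists\vec{Z}.\ \Pi\land\Sigma$, with least-fixed-point semantics. A rule is a base rule if $\Sigma$ contains no predicate atoms, otherwise inductive. Every inductive rule $Q(E,\vec F)::=\exists \vec Z.\Pi\land\Sigma_1\ast\Sigma_2$ satisfies: $\Sigma_1$ consists only of points-to atoms, contains a unique points-to atom with source $E$, contains all location variables of $\vec Z$, and its Gaifman graph is a connected DAG in which every vertex is reachable from $E$; $\Sigma_2$ consists only of predicate atoms $Q'(Z,\vec{Z'})$ with $Z$ a vertex of that graph without outgoing arcs. Syntactic compositionality: $P$ has parameters $(\vec\alpha,\vec\beta,\vec\xi)$ with source parameters $\vec\alpha=(\alpha_1,\alpha_2)=(E,C)$, hole parameters $\vec\beta=(\beta_1,\beta_2)=(F,H)$ ($E,F$ location variables, $C,H$ data variables) and static parameters $\vec\xi$. $P$ is syntactically compositional if its definition has exactly one base rule, namely $P(\vec\alpha,\vec\beta,\vec\xi)::=\alpha_1=\beta_1\land\alpha_2=\beta_2\land\mathtt{emp}$, and at least one inductive rule, and every inductive rule has the form $P(\vec\alpha,\vec\beta,\vec\xi)::=\exists\vec Z.\ \Pi\land\Sigma_1\ast\Sigma_2\ast P(\vec\gamma,\vec\beta,\vec\xi)$ where $\Sigma_1$ is a nonempty separating conjunction of points-to atoms, $\Sigma_2$ is a (possibly empty) separating conjunction of predicate atoms (possibly including $P$ atoms), $\vec\gamma$ consists of variables of $\vec Z$, and the variables of $\vec\beta$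 do not occur in $\Pi$, $\Sigma_1$, $\Sigma_2$ or $\vec\gamma$ (and the rule satisfies the general root/connectedness conditions above). *)

From Stdlib Require Import List Relations Permutation.
Import ListNotations.

(* Parameters of the logic: locations with nil, data values (one domain that
   may contain values, multisets, ...), pointer fields, data fields, an abstract
   decidable theory of data constraints (satisfaction relation + free variables),
   and predicate names. *)
Record SLSig := {
  Loc : Type;
  nilloc : Loc;
  Dat : Type;
  PFld : Type;
  DFld : Type;
  DCon : Type;
  dsat : DCon -> (nat -> Dat) -> Prop;
  dfv : DCon -> list nat;
  PName : Type
}.

Definition dcoincidence (S : SLSig) : Prop :=
  forall (c : DCon S) (v w : nat -> Dat S),
    (forall x, In x (dfv S c) -> v x = w x) -> (dsat S c v <-> dsat S c w).

(* Location terms: location variables (names in nat) and the constant nil.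
   Data variables are names in nat (separate namespace). *)
Inductive lterm := LV (x : nat) | LNil.
Inductive arg := AL (t : lterm) | AD (x : nat).
Inductive formal := FL (x : nat) | FD (x : nat).

Definition formal_arg (f : formal) : arg :=
  match f with FL x => AL (LV x) | FD x => AD x end.

Definition lvars_lterm (t : lterm) : list nat :=
  match t with LV x => [x] | LNil => [] end.
Definition lvars_arg (a : arg) : list nat :=
  match a with AL t => lvars_lterm t | AD _ => [] end.
Definition dvars_arg (a : arg) : list nat :=
  match a with AL _ => [] | AD x => [x] end.
Definition lformals (fs : list formal) : list nat :=
  flat_map (fun f => match f with FL x => [x] | FD _ => [] end) fs.
Definition dformals (fs : list formal) : list nat :=
  flat_map (fun f => match f with FL _ => [] | FD x => [x] end) fs.

Section SL.
Variable S : SLSig.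

Inductive pure_atom :=
  | PEq (t u : lterm)
  | PNeq (t u : lterm)
  | PDEq (x y : nat)
  | PData (c : DCon S).

Record pto := { src : lterm;
                pflds : list (PFld S * lterm);
                dflds : list (DFld S * nat) }.

Record patom := { pname : PName S; proot : lterm; pargs : list arg }.

Inductive satom := SPto (p : pto) | SPred (a : patom).

(* a rule  Q(formals) ::= exists Z. Pi /\ Sigma, where Pi is a conjunction
   (list) of pure atoms, Sigma a separating conjunction (list) of spatial atoms
   (empty list = emp); Z = all variables of the body other than the formals. *)
Record rule := { rpure : list pure_atom; rspat : list satom }.

Record pdef := { pformals : list formal; prules : list rule }.

Record stack := { sl : nat -> Loc S; sd : nat -> Dat S }.
Record heap := { hp : Loc S -> PFld S -> option (Loc S);
                 hd : Loc S -> DFld S -> option (Dat S) }.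
Definition val := (Loc S + Dat S)%type.

Definition evl (s : stack) (t : lterm) : Loc S :=
  match t with LV x => sl s x | LNil => nilloc S end.
Definition eva (s : stack) (a : arg) : val :=
  match a with AL t => inl (evl s t) | AD x => inr (sd s x) end.

Definition upd_l (s : stack) (x : nat) (v : Loc S) : stack :=
  {| sl := fun y => if Nat.eqb y x then v else sl s y; sd := sd s |}.
Definition upd_d (s : stack) (x : nat) (v : Dat S) : stack :=
  {| sl := sl s; sd := fun y => if Nat.eqb y x then v else sd s y |}.

Definition hemp (h : heap) : Prop :=
  (forall l f, hp h l f = None) /\ (forall l f, hd h l f = None).

Definition hunion (h1 h2 h : heap) : Prop :=
  (forall l f, hp h1 l f = None \/ hp h2 l f = None) /\
  (forall l f, hd h1 l f = None \/ hd h2 l f = None) /\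
  (forall l f, hp h l f = match hp h1 l f with Some v => Some v | None => hp h2 l f end) /\
  (forall l f, hd h l f = match hd h1 l f with Some v => Some v | None => hd h2 l f end).

Definition pto_sat (s : stack) (p : pto) (h : heap) : Prop :=
  (forall l f, hp h l f <> None <-> (l = evl s (src p) /\ exists t, In (f, t) (pflds p))) /\
  (forall l f, hd h l f <> None <-> (l = evl s (src p) /\ exists x, In (f, x) (dflds p))) /\
  (forall f t, In (f, t) (pflds p) -> hp h (evl s (src p)) f = Some (evl s t)) /\
  (forall f x, In (f, x) (dflds p) -> hd h (evl s (src p)) f = Some (sd s x)).

Definition pure_sat (s : stack) (a : pure_atom) : Prop :=
  match a with
  | PEq t u => evl s t = evl s u
  | PNeq t u => evl s t <> evl s u
  | PDEq x y => sd s x = sd s y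
  | PData c => dsat S c (sd s)
  end.

Definition bind_ok (s : stack) (fs : list formal) (vs : list val) : Prop :=
  Forall2 (fun f v => eva s (formal_arg f) = v) fs vs.

Inductive psat (defs : PName S -> pdef) : PName S -> list val -> heap -> Prop :=
  | psat_intro : forall Q vs h r s,
      In r (prules (defs Q)) ->
      bind_ok s (pformals (defs Q)) vs ->
      Forall (pure_sat s) (rpure r) ->
      ssat defs s (rspat r) h ->
      psat defs Q vs h
with ssat (defs : PName S -> pdef) : stack -> list satom -> heap -> Prop :=
  | ssat_nil : forall s h, hemp h -> ssat defs s [] h
  | ssat_pto : forall s p rest h h1 h2,
      hunion h1 h2 h -> pto_sat s p h1 -> ssat defs s rest h2 ->
      ssat defs s (SPto p :: rest) h
  | ssat_pred : forall s a rest h h1 h2,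
      hunion h1 h2 h ->
      psat defs (pname a) (inl (evl s (proot a)) :: map (eva s) (pargs a)) h1 ->
      ssat defs s rest h2 ->
      ssat defs s (SPred a :: rest) h.

Definition atom_sat (defs : PName S -> pdef) (s : stack) (a : patom) (h : heap) : Prop :=
  psat defs (pname a) (inl (evl s (proot a)) :: map (eva s) (pargs a)) h.

Definition ptos_of (l : list satom) : list pto :=
  flat_map (fun a => match a with SPto p => [p] | SPred _ => [] end) l.
Definition preds_of (l : list satom) : list patom :=
  flat_map (fun a => match a with SPto _ => [] | SPred q => [q] end) l.

Definition is_inductive (r : rule) : Prop := preds_of (rspat r) <> [].

Definition lvars_pure (a : pure_atom) : list nat :=
  match a with
  | PEq t u | PNeq t u => lvars_lterm t ++ lvars_lterm u
  | _ => []
  end.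
Definition dvars_pure (a : pure_atom) : list nat :=
  match a with
  | PDEq x y => [x; y]
  | PData c => dfv S c
  | _ => []
  end.
Definition lvars_pto (p : pto) : list nat :=
  lvars_lterm (src p) ++ flat_map (fun ft => lvars_lterm (snd ft)) (pflds p).
Definition dvars_pto (p : pto) : list nat := map snd (dflds p).
Definition lvars_patom (a : patom) : list nat :=
  lvars_lterm (proot a) ++ flat_map lvars_arg (pargs a).
Definition dvars_patom (a : patom) : list nat := flat_map dvars_arg (pargs a).
Definition lvars_satom (a : satom) : list nat :=
  match a with SPto p => lvars_pto p | SPred q => lvars_patom q end.
Definition lvars_rule (r : rule) : list nat :=
  flat_map lvars_pure (rpure r) ++ flat_map lvars_satom (rspat r).

Definition gvertex (sig : list pto) (t : lterm) : Prop :=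
  exists p, In p sig /\ (src p = t \/ exists f, In (f, t) (pflds p)).
Definition garc (sig : list pto) (u v : lterm) : Prop :=
  exists p f, In p sig /\ src p = u /\ In (f, v) (pflds p).

Definition root_conditions (e : nat) (lfs : list nat) (r : rule) : Prop :=
  let sig := ptos_of (rspat r) in
  (exists l1 p l2, sig = l1 ++ p :: l2 /\ src p = LV e /\
                   Forall (fun q => src q <> LV e) (l1 ++ l2)) /\
  (forall x, In x (lvars_rule r) -> ~ In x lfs -> gvertex sig (LV x)) /\
  (forall t, gvertex sig t -> clos_refl_trans lterm (garc sig) (LV e) t) /\
  (forall t, ~ clos_trans lterm (garc sig) t t) /\
  (forall a, In a (preds_of (rspat r)) ->
             gvertex sig (proot a) /\ forall v, ~ garc sig (proot a) v).

Definition wf_system (defs : PName S -> pdef) : Prop :=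
  forall Q, NoDup (pformals (defs Q)) /\
    exists e rest, pformals (defs Q) = FL e :: rest /\
      forall r, In r (prules (defs Q)) -> is_inductive r ->
        root_conditions e (lformals (pformals (defs Q))) r.

Definition synt_compositional (defs : PName S -> pdef) (P : PName S)
    (a1 a2 b1 b2 : nat) (xs : list formal) : Prop :=
  let fs := pformals (defs P) in
  let rs := prules (defs P) in
  let base := {| rpure := [PEq (LV a1) (LV b1); PDEq a2 b2]; rspat := [] |} in
  fs = FL a1 :: FD a2 :: FL b1 :: FD b2 :: xs /\
  (exists l1 l2, rs = l1 ++ base :: l2 /\ Forall is_inductive (l1 ++ l2)) /\
  (exists r, In r rs /\ is_inductive r) /\
  (forall r, In r rs -> is_inductive r ->
     exists (sig1 : list pto) (sig2 : list patom) (g1 g2 : nat),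
       sig1 <> [] /\
       Permutation (rspat r)
         (map SPto sig1 ++ map SPred sig2 ++
          [SPred {| pname := P; proot := LV g1;
                    pargs := AD g2 :: AL (LV b1) :: AD b2 :: map formal_arg xs |}]) /\
       ~ In g1 (lformals fs) /\ ~ In g2 (dformals fs) /\
       ~ In b1 (flat_map lvars_pure (rpure r) ++ flat_map lvars_pto sig1 ++
                flat_map lvars_patom sig2 ++ [g1]) /\
       ~ In b2 (flat_map dvars_pure (rpure r) ++ flat_map dvars_pto sig1 ++
                flat_map dvars_patom sig2 ++ [g2])).

Definition sem_compositional_at (defs : PName S -> pdef) (P : PName S)
    (a1 a2 b1 b2 : nat) (xs : list formal) (g1 g2 : nat) : Prop :=
  forall (s : stack) (h : heap),
    (exists (l : Loc S) (d : Dat S),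
       let s' := upd_d (upd_l s b1 l) b2 d in
       exists h1 h2, hunion h1 h2 h /\
         atom_sat defs s' {| pname := P; proot := LV a1;
              pargs := AD a2 :: AL (LV b1) :: AD b2 :: map formal_arg xs |} h1 /\
         atom_sat defs s' {| pname := P; proot := LV b1;
              pargs := AD b2 :: AL (LV g1) :: AD g2 :: map formal_arg xs |} h2) ->
    atom_sat defs s {| pname := P; proot := LV a1;
              pargs := AD a2 :: AL (LV g1) :: AD g2 :: map formal_arg xs |} h.

End SL.

(* By induction on the derivation of the first segment [P(alpha, beta, xi)].  For
   the base rule the segment is empty and [alpha = beta], so the second segment
   is already the required one.  For an inductive rule the body ends with
   [P(gamma, beta, xi)]; the induction hypothesis glues it to the second segment,
   giving [P(gamma, gamma', xi)].  Re-instantiating the rule with the hole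
   parameters bound to [gamma'] instead of [beta] leaves the rest of the body
   satisfied, because the hole parameters occur nowhere else in the rule. *)

From Pilot Require Import Defs.
From Stdlib Require Import List Permutation PeanoNat FunctionalExtensionality.
Import ListNotations.

Section Heaps.
Variable S : SLSig.

Definition heap_empty : heap S :=
  {| Defs.hp := fun _ _ => None; Defs.hd := fun _ _ => None |}.

Definition heap_join (h1 h2 : heap S) : heap S :=
  {| Defs.hp := fun l f =>
       match hp S h1 l f with Some v => Some v | None => hp S h2 l f end;
     Defs.hd := fun l f =>
       match Defs.hd S h1 l f with Some v => Some v | None => Defs.hd S h2 l f end |}.

Lemma heap_ext (h h' : heap S) :
  (forall l f, hp S h l f = hp S h' l f) ->
  (forall l f, Defs.hd S h l f = Defs.hd S h' l f) -> h = h'.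
Proof.
  destruct h as [p d], h' as [p' d']; simpl; intros Ep Ed.
  replace p' with p by (extensionality l; extensionality f; auto).
  replace d' with d by (extensionality l; extensionality f; auto).
  reflexivity.
Qed.

Lemma hemp_heap_empty : hemp S heap_empty.
Proof. split; reflexivity. Qed.

Lemma hunion_empty_l h : hunion S heap_empty h h.
Proof. repeat split; auto. Qed.

Lemma hunion_hemp_l h1 h2 h : hemp S h1 -> hunion S h1 h2 h -> h = h2.
Proof.
  intros [E1 E2] (_ & _ & U3 & U4); apply heap_ext; intros l f;
    [rewrite U3, E1 | rewrite U4, E2]; reflexivity.
Qed.

Lemma hunion_comm h1 h2 h : hunion S h1 h2 h -> hunion S h2 h1 h.
Proof.
  intros (D1 & D2 & U3 & U4); repeat split.
  - intros l f; destruct (D1 l f); auto.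
  - intros l f; destruct (D2 l f); auto.
  - intros l f; rewrite U3; destruct (D1 l f) as [E|E]; rewrite E;
      destruct (hp S h2 l f), (hp S h1 l f); congruence.
  - intros l f; rewrite U4; destruct (D2 l f) as [E|E]; rewrite E;
      destruct (Defs.hd S h2 l f), (Defs.hd S h1 l f); congruence.
Qed.

Lemma hunion_assoc_lr h1 h2 h12 h3 h :
  hunion S h1 h2 h12 -> hunion S h12 h3 h ->
  exists h23, hunion S h2 h3 h23 /\ hunion S h1 h23 h.
Proof.
  intros (A1 & A2 & A3 & A4) (B1 & B2 & B3 & B4).
  exists (heap_join h2 h3); repeat split; simpl.
  - intros l f; specialize (B1 l f); rewrite A3 in B1;
      destruct (hp S h1 l f), (hp S h2 l f); destruct B1; intuition congruence.
  - intros l f; specialize (B2 l f); rewrite A4 in B2;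
      destruct (Defs.hd S h1 l f), (Defs.hd S h2 l f); destruct B2; intuition congruence.
  - intros l f; specialize (B1 l f); specialize (A1 l f); rewrite A3 in B1;
      destruct (hp S h1 l f), (hp S h2 l f); destruct A1; intuition congruence.
  - intros l f; specialize (B2 l f); specialize (A2 l f); rewrite A4 in B2;
      destruct (Defs.hd S h1 l f), (Defs.hd S h2 l f); destruct A2; intuition congruence.
  - intros l f; rewrite B3, A3; destruct (hp S h1 l f); reflexivity.
  - intros l f; rewrite B4, A4; destruct (Defs.hd S h1 l f); reflexivity.
Qed.

Lemma hunion_assoc_rl h1 h2 h23 h3 h :
  hunion S h2 h3 h23 -> hunion S h1 h23 h ->
  exists h12, hunion S h1 h2 h12 /\ hunion S h12 h3 h.
Proof.
  intros U V; apply hunion_comm in U; apply hunion_comm in V.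
  destruct (hunion_assoc_lr _ _ _ _ _ U V) as (h21 & U' & V').
  exists h21; split; apply hunion_comm; assumption.
Qed.

End Heaps.

(* Predicate atoms are read through an arbitrary interpretation [I], so that the
   induction over [psat] can carry an invariant stronger than [psat] itself. *)
Section SeparatingConjunction.
Variable S : SLSig.

Definition interp := PName S -> list (val S) -> heap S -> Prop.

Definition satom_sat (I : interp) (s : stack S) (a : satom S) (h : heap S) : Prop :=
  match a with
  | SPto _ p => pto_sat S s p h
  | SPred _ q => I (pname S q) (inl (evl S s (proot S q)) :: map (eva S s) (pargs S q)) h
  end.

Inductive sepsat (I : interp) (s : stack S) : list (satom S) -> heap S -> Prop :=
  | sepsat_nil h : hemp S h -> sepsat I s [] h
  | sepsat_cons a l h h1 h2 :
      hunion S h1 h2 h -> satom_sat I s a h1 -> sepsat I s l h2 -> sepsat I s (a :: l) h.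

Lemma sepsat_nil_inv I s h : sepsat I s [] h -> hemp S h.
Proof. inversion 1; assumption. Qed.

Lemma sepsat_cons_inv I s a l h : sepsat I s (a :: l) h ->
  exists h1 h2, hunion S h1 h2 h /\ satom_sat I s a h1 /\ sepsat I s l h2.
Proof. inversion 1; eauto. Qed.

Lemma sepsat_single_inv I s a h : sepsat I s [a] h -> satom_sat I s a h.
Proof.
  intros H; apply sepsat_cons_inv in H as (h1 & h2 & U & Ha & E).
  apply sepsat_nil_inv in E; apply hunion_comm in U.
  rewrite (hunion_hemp_l S _ _ _ E U); assumption.
Qed.

Lemma sepsat_single I s a h : satom_sat I s a h -> sepsat I s [a] h.
Proof.
  intros Ha; apply sepsat_cons with h (heap_empty S); auto using sepsat_nil, hemp_heap_empty.
  apply hunion_comm, hunion_empty_l.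
Qed.

Lemma sepsat_app I s l1 l2 h1 h2 h :
  sepsat I s l1 h1 -> sepsat I s l2 h2 -> hunion S h1 h2 h -> sepsat I s (l1 ++ l2) h.
Proof.
  intros H; revert h2 h; induction H as [h0 E | a l h0 ha hl U Ha Hl IH];
    intros h2 h H2 V; simpl.
  - rewrite (hunion_hemp_l S _ _ _ E V); assumption.
  - destruct (hunion_assoc_lr S _ _ _ _ _ U V) as (h' & U' & V').
    apply sepsat_cons with ha h'; eauto.
Qed.

Lemma sepsat_app_inv I s l1 l2 h : sepsat I s (l1 ++ l2) h ->
  exists h1 h2, hunion S h1 h2 h /\ sepsat I s l1 h1 /\ sepsat I s l2 h2.
Proof.
  revert h; induction l1 as [|a l1 IH]; intros h H; simpl in H.
  - exists (heap_empty S), h; auto using hunion_empty_l, sepsat_nil, hemp_heap_empty.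
  - apply sepsat_cons_inv in H as (ha & hl & U & Ha & Hl).
    apply IH in Hl as (h1 & h2 & U' & H1 & H2).
    destruct (hunion_assoc_rl S _ _ _ _ _ U' U) as (h' & V & V').
    exists h', h2; split; [exact V' | split; [econstructor; eauto | exact H2]].
Qed.

Lemma sepsat_perm I s l l' h : Permutation l l' -> sepsat I s l h -> sepsat I s l' h.
Proof.
  intros Hp; revert h; induction Hp as [| a l l' _ IH | a b l | l l' l'' _ IH _ IH'];
    intros h H; auto.
  - apply sepsat_cons_inv in H as (h1 & h2 & U & Ha & Hl); econstructor; eauto.
  - apply sepsat_cons_inv in H as (h1 & h2 & U & Hb & Hl).
    apply sepsat_cons_inv in Hl as (h3 & h4 & U' & Ha & Hl).
    destruct (hunion_assoc_rl S _ _ _ _ _ U' U) as (h13 & V & V').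
    apply hunion_comm in V.
    destruct (hunion_assoc_lr S _ _ _ _ _ V V') as (h14 & W & W').
    econstructor; eauto; econstructor; eauto.
Qed.

Lemma sepsat_impl I J s s' l h :
  (forall a h1, In a l -> satom_sat I s a h1 -> satom_sat J s' a h1) ->
  sepsat I s l h -> sepsat J s' l h.
Proof.
  intros Himpl H; induction H as [h E | a l h h1 h2 U Ha Hl IH];
    econstructor; eauto using in_eq, in_cons.
Qed.

Lemma sepsat_ssat defs s l h : sepsat (psat S defs) s l h -> ssat S defs s l h.
Proof.
  induction 1 as [h E | [p|q] l h h1 h2 U Ha _ IH]; econstructor; eauto.
Qed.

End SeparatingConjunction.

Section FreshUpdate.
Variable S : SLSig.
Variables (s : stack S) (x y : nat) (l : Loc S) (d : Dat S).

Let s' := upd_d S (upd_l S s x l) y d.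

Lemma sl_upd_here : sl S s' x = l.
Proof. simpl; rewrite Nat.eqb_refl; reflexivity. Qed.

Lemma sd_upd_here : sd S s' y = d.
Proof. simpl; rewrite Nat.eqb_refl; reflexivity. Qed.

Lemma sl_upd_fresh z : z <> x -> sl S s' z = sl S s z.
Proof. intros Hz; simpl; destruct (Nat.eqb_spec z x); congruence. Qed.

Lemma sd_upd_fresh z : z <> y -> sd S s' z = sd S s z.
Proof. intros Hz; simpl; destruct (Nat.eqb_spec z y); congruence. Qed.

Lemma evl_upd_fresh t : ~ In x (lvars_lterm t) -> evl S s' t = evl S s t.
Proof. destruct t as [z|]; simpl; intros Hx; [apply sl_upd_fresh; intros ->|]; tauto. Qed.

Lemma eva_upd_fresh args :
  ~ In x (flat_map lvars_arg args) -> ~ In y (flat_map dvars_arg args) ->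
  map (eva S s') args = map (eva S s) args.
Proof.
  induction args as [|[t|z] args IH]; cbn [map flat_map eva lvars_arg dvars_arg app];
    intros Hx Hy; auto.
  - rewrite in_app_iff in Hx; rewrite evl_upd_fresh, IH; tauto.
  - rewrite sd_upd_fresh, IH; simpl in Hy; tauto.
Qed.

Lemma formals_upd_fresh fs :
  ~ In (FL x) fs -> ~ In (FD y) fs ->
  map (eva S s') (map formal_arg fs) = map (eva S s) (map formal_arg fs).
Proof.
  induction fs as [|[z|z] fs IH]; cbn [map formal_arg eva evl In]; intros Hx Hy; auto.
  - rewrite sl_upd_fresh, IH; try tauto; intros ->; tauto.
  - rewrite sd_upd_fresh, IH; try tauto; intros ->; tauto.
Qed.

Lemma pure_sat_upd_fresh (Hdc : dcoincidence S) a :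
  ~ In x (lvars_pure S a) -> ~ In y (dvars_pure S a) -> pure_sat S s a -> pure_sat S s' a.
Proof.
  destruct a as [t u | t u | z w | c]; cbn [lvars_pure dvars_pure pure_sat In];
    rewrite ?in_app_iff; intros Hx Hy.
  - rewrite !evl_upd_fresh; tauto.
  - rewrite !evl_upd_fresh; tauto.
  - rewrite !sd_upd_fresh; intuition.
  - apply (Hdc c (sd S s)); intros z Hz; symmetry; apply sd_upd_fresh; congruence.
Qed.

Lemma pto_sat_upd_fresh p h :
  ~ In x (lvars_pto S p) -> ~ In y (dvars_pto S p) -> pto_sat S s p h -> pto_sat S s' p h.
Proof.
  unfold lvars_pto, dvars_pto; rewrite in_app_iff; intros Hx Hy (D1 & D2 & V1 & V2).
  assert (Esrc : evl S s' (src S p) = evl S s (src S p)) by (apply evl_upd_fresh; tauto).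
  split; [|split; [|split]]; rewrite ?Esrc.
  - exact D1.
  - exact D2.
  - intros f t Hin; rewrite (V1 f t Hin), evl_upd_fresh; [reflexivity|].
    intros Ht; apply Hx; right; apply in_flat_map; exists (f, t); auto.
  - intros f z Hin; rewrite (V2 f z Hin), sd_upd_fresh; [reflexivity|].
    intros ->; apply Hy, in_map_iff; exists (f, y); auto.
Qed.

Lemma patom_sat_upd_fresh (I : interp S) q h :
  ~ In x (lvars_patom S q) -> ~ In y (dvars_patom S q) ->
  satom_sat S I s (SPred S q) h -> satom_sat S I s' (SPred S q) h.
Proof.
  unfold lvars_patom, dvars_patom; rewrite in_app_iff; simpl; intros Hx Hy.
  rewrite evl_upd_fresh, eva_upd_fresh; tauto.
Qed.

Lemma sepsat_upd_fresh (I J : interp S) sig1 sig2 h :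
  (forall Q vs h, I Q vs h -> J Q vs h) ->
  ~ In x (flat_map (lvars_pto S) sig1 ++ flat_map (lvars_patom S) sig2) ->
  ~ In y (flat_map (dvars_pto S) sig1 ++ flat_map (dvars_patom S) sig2) ->
  sepsat S I s (map (SPto S) sig1 ++ map (SPred S) sig2) h ->
  sepsat S J s' (map (SPto S) sig1 ++ map (SPred S) sig2) h.
Proof.
  rewrite !in_app_iff, !in_flat_map; intros IJ Hx Hy.
  apply sepsat_impl; intros a h1 Ha; rewrite in_app_iff, !in_map_iff in Ha.
  destruct Ha as [(p & <- & Hp) | (q & <- & Hq)].
  - apply pto_sat_upd_fresh; intros Hin; eauto.
  - intros Hq'; apply IJ, (patom_sat_upd_fresh I); auto; intros Hin; eauto.
Qed.

End FreshUpdate.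

Lemma bind_ok_map S s fs vs :
  bind_ok S s fs vs -> vs = map (eva S s) (map formal_arg fs).
Proof. induction 1; simpl; f_equal; auto. Qed.

Lemma bind_ok_eva S s fs : bind_ok S s fs (map (eva S s) (map formal_arg fs)).
Proof. induction fs; simpl; constructor; auto. Qed.

Scheme psat_mut := Induction for psat Sort Prop
with ssat_mut := Induction for ssat Sort Prop.

Section Composition.
Variable S : SLSig.
Hypothesis Hdc : dcoincidence S.
Variable defs : PName S -> pdef S.
Variables (P : PName S) (a1 a2 b1 b2 : nat) (xs : list formal).
Hypothesis HP : synt_compositional S defs P a1 a2 b1 b2 xs.
Hypothesis Hnodup : NoDup (pformals S (defs P)).

Definition pvals (A : Loc S) (Ad : Dat S) (B : Loc S) (Bd : Dat S) (X : list (val S)) :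
  list (val S) := inl A :: inr Ad :: inl B :: inr Bd :: X.

Let Hformals : pformals S (defs P) = FL a1 :: FD a2 :: FL b1 :: FD b2 :: xs.
Proof. apply HP. Qed.

Lemma hole_params_fresh :
  a1 <> b1 /\ a2 <> b2 /\ ~ In (FL b1) xs /\ ~ In (FD b2) xs.
Proof.
  pose proof Hnodup as N; rewrite Hformals in N.
  inversion N as [|? ? N1 N']; inversion N' as [|? ? N2 N''];
    inversion N'' as [|? ? N3 N''']; inversion N''' as [|? ? N4 _]; subst; simpl in *.
  repeat split; [intros ->; tauto | intros ->; tauto | tauto | tauto].
Qed.

Lemma rule_base_or_inductive r : In r (prules S (defs P)) ->
  r = {| rpure := [PEq S (LV a1) (LV b1); PDEq S a2 b2]; rspat := [] |} \/ is_inductive S r.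
Proof.
  destruct HP as (_ & (l1 & l2 & -> & Hind) & _); rewrite Forall_forall in Hind.
  rewrite in_app_iff; intros [Hr | [Hr | Hr]]; auto using in_or_app.
Qed.

Lemma bind_ok_pvals s A Ad B Bd X :
  bind_ok S s (pformals S (defs P)) (pvals A Ad B Bd X) ->
  sl S s a1 = A /\ sd S s a2 = Ad /\ sl S s b1 = B /\ sd S s b2 = Bd /\
  map (eva S s) (map formal_arg xs) = X.
Proof.
  intros Hb; apply bind_ok_map in Hb; rewrite Hformals in Hb.
  injection Hb; auto.
Qed.

(* The induction invariant: a [P]-segment from [(A,Ad)] to [(B,Bd)] extends by
   any [P]-segment starting at [(B,Bd)]. *)
Definition composes (Q : PName S) (vs : list (val S)) (h : heap S) : Prop :=
  Q = P -> forall A Ad B Bd X, vs = pvals A Ad B Bd X ->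
  forall C Cd h2 h', psat S defs P (pvals B Bd C Cd X) h2 -> hunion S h h2 h' ->
  psat S defs P (pvals A Ad C Cd X) h'.

Lemma compose_base s h A Ad B Bd X C Cd h2 h' :
  bind_ok S s (pformals S (defs P)) (pvals A Ad B Bd X) ->
  Forall (pure_sat S s) [PEq S (LV a1) (LV b1); PDEq S a2 b2] -> hemp S h ->
  psat S defs P (pvals B Bd C Cd X) h2 -> hunion S h h2 h' ->
  psat S defs P (pvals A Ad C Cd X) h'.
Proof.
  intros Hb Hpure He H2 U.
  destruct (bind_ok_pvals _ _ _ _ _ _ Hb) as (EA & EAd & EB & EBd & _).
  rewrite Forall_forall in Hpure.
  assert (Eab : sl S s a1 = sl S s b1) by exact (Hpure _ (or_introl eq_refl)).
  assert (Eabd : sd S s a2 = sd S s b2) by exact (Hpure _ (or_intror (or_introl eq_refl))).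
  rewrite <- EA, <- EAd, Eab, Eabd, EB, EBd.
  rewrite (hunion_hemp_l S _ _ _ He U); assumption.
Qed.

Lemma compose_inductive r s h A Ad B Bd X C Cd h2 h' :
  In r (prules S (defs P)) -> is_inductive S r ->
  bind_ok S s (pformals S (defs P)) (pvals A Ad B Bd X) ->
  Forall (pure_sat S s) (rpure S r) ->
  sepsat S (fun Q vs h => psat S defs Q vs h /\ composes Q vs h) s (rspat S r) h ->
  psat S defs P (pvals B Bd C Cd X) h2 -> hunion S h h2 h' ->
  psat S defs P (pvals A Ad C Cd X) h'.
Proof.
  intros Hr Hi Hb Hpure Hbody H2 U.
  destruct hole_params_fresh as (Na & Nad & Nb & Nbd).
  destruct (bind_ok_pvals _ _ _ _ _ _ Hb) as (EA & EAd & EB & EBd & EX).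
  destruct HP as (_ & _ & _ & Hshape).
  destruct (Hshape r Hr Hi) as (sig1 & sig2 & g1 & g2 & _ & Hperm & _ & _ & Hb1 & Hb2).
  rewrite !in_app_iff in Hb1, Hb2; simpl in Hb1, Hb2.
  set (last := {| pname := P; proot := LV g1;
                  pargs := AD g2 :: AL (LV b1) :: AD b2 :: map formal_arg xs |}) in *.
  apply (sepsat_perm _ _ _ _ _ _ Hperm) in Hbody; rewrite app_assoc in Hbody.
  apply sepsat_app_inv in Hbody as (hf & hl & Ul & Hframe & Hlast).
  apply sepsat_single_inv in Hlast as [_ Hcomp].
  destruct (hunion_assoc_lr S _ _ _ _ _ Ul U) as (hl' & Ul' & U').
  assert (Hext : psat S defs P (pvals (sl S s g1) (sd S s g2) C Cd X) hl').
  { refine (Hcomp eq_refl _ _ B Bd X _ C Cd h2 hl' H2 Ul').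
    rewrite <- EB, <- EBd, <- EX; reflexivity. }
  apply psat_intro with r (upd_d S (upd_l S s b1 C) b2 Cd); [exact Hr | | |].
  - replace (pvals A Ad C Cd X) with
      (map (eva S (upd_d S (upd_l S s b1 C) b2 Cd)) (map formal_arg (pformals S (defs P))));
      [apply bind_ok_eva |].
    rewrite Hformals; cbn [map formal_arg eva evl].
    rewrite sl_upd_fresh, sd_upd_fresh, sl_upd_here, sd_upd_here, formals_upd_fresh
      by assumption.
    rewrite EA, EAd, EX; reflexivity.
  - rewrite Forall_forall in Hpure |- *; intros a Ha.
    apply pure_sat_upd_fresh; auto; intros Hin;
      [apply Hb1 | apply Hb2]; left; apply in_flat_map; eauto.
  - apply sepsat_ssat, (sepsat_perm _ _ _ _ _ _ (Permutation_sym Hperm)).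
    rewrite app_assoc; apply sepsat_app with hf hl'; [| apply sepsat_single | exact U'].
    + refine (sepsat_upd_fresh S s b1 b2 C Cd _ _ sig1 sig2 hf _ _ _ Hframe);
        [intros ? ? ? Hc; exact (proj1 Hc) | rewrite in_app_iff; tauto
        | rewrite in_app_iff; tauto].
    + cbn [satom_sat last pname proot pargs evl map eva].
      rewrite sl_upd_fresh, sd_upd_fresh, sl_upd_here, sd_upd_here, formals_upd_fresh, EX
        by tauto.
      exact Hext.
Qed.

Lemma psat_composes Q vs h : psat S defs Q vs h -> composes Q vs h.
Proof.
  apply (psat_mut S defs (fun Q vs h _ => composes Q vs h)
           (fun s l h _ =>
              sepsat S (fun Q vs h => psat S defs Q vs h /\ composes Q vs h) s l h)).
  - intros Q' vs' h0 r s Hr Hb Hpure Hbody IH -> A Ad B Bd X -> C Cd h2 h' H2 U.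
    destruct (rule_base_or_inductive r Hr) as [-> | Hi].
    + apply sepsat_nil_inv in IH; eapply compose_base; eauto.
    + eapply compose_inductive; eauto.
  - intros; constructor; assumption.
  - intros; econstructor; eauto.
  - intros; econstructor; simpl; eauto.
Qed.

Lemma psat_compose A Ad B Bd C Cd X h1 h2 h :
  psat S defs P (pvals A Ad B Bd X) h1 -> psat S defs P (pvals B Bd C Cd X) h2 ->
  hunion S h1 h2 h -> psat S defs P (pvals A Ad C Cd X) h.
Proof. intros H1; apply (psat_composes _ _ _ H1 eq_refl _ _ _ _ _ eq_refl). Qed.

End Composition.

Theorem theorem1 (S : SLSig) (Hdc : dcoincidence S)
  (defs : PName S -> pdef S) (Hwf : wf_system S defs)
  (P : PName S) (a1 a2 b1 b2 : nat) (xs : list formal)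
  (HP : synt_compositional S defs P a1 a2 b1 b2 xs) :
  forall g1 g2 : nat, g1 <> b1 -> g2 <> b2 ->
    sem_compositional_at S defs P a1 a2 b1 b2 xs g1 g2.
Proof.
  intros g1 g2 Hg1 Hg2 s h (l & d & h1 & h2 & U & H1 & H2).
  destruct (Hwf P) as [Hnodup _].
  destruct (hole_params_fresh S defs P a1 a2 b1 b2 xs HP Hnodup) as (Na & Nad & Nb & Nbd).
  unfold atom_sat in *; cbn [pname proot pargs map eva evl] in *.
  rewrite formals_upd_fresh in H1, H2 by assumption.
  rewrite sl_upd_fresh, sd_upd_fresh, sl_upd_here, sd_upd_here in H1 by assumption.
  rewrite sl_upd_here, sd_upd_here, sl_upd_fresh, sd_upd_fresh in H2 by assumption.
  exact (psat_compose S Hdc defs P a1 a2 b1 b2 xs HP Hnodup _ _ _ _ _ _ _ _ _ _ H1 H2 U).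
Qed.
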